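(* Let $(F_n)_{n\ge1}$ be a sequence of probability distribution functions on $\mathbb{R}$, and let $X$ denote a random variable with distribution $F_n$. Assume: (i) $0<F_n(0)$ for all $n$ and $F_n(0)\to0$; (ii) $\mu_n:=\mathbb{E}_{F_n}[X]\ge\mu$ for all $n$, for some constant $\mu>0$; (iii) there are constants $C,K,M<\infty$ such that for every $n$: $\mathbb{E}_{F_n}[X^2]\le C$, $\mathbb{E}_{F_n}[X^2\mid X\le0]\le K$, and $F_n(x+t)-F_n(x)\le Mt$ for all $x\ge0$, $t>0$. Define $G_n(y)=\int_{-\infty}^{y}(x^2-yx)\,dF_n(x)$ and let $y_n^*\ge0$ be the (unique) zero of $G_n$ in $[0,\infty)$. Then $$F_n(y_n^* )\le F_n(0)+\Theta^{1/3}F_n(0)^{1/3},\qquad \Theta=27\Big(K+\frac{C\sqrt K}{\mu}\Big)M^2,$$ so in particular $F_n(y_n^* )=O(F_n(0)^{1/3})\to0$ as $n\to\infty$. *)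

(* A probability distribution function F on R is
   represented by its law: a probability measure P on the Borel sets of R,
   with F(y) = P(]-oo, y]). X is the identity random variable under P. *)
From HB Require Import structures.
From mathcomp Require Import all_boot all_order all_algebra.
From mathcomp Require Import all_classical all_reals all_analysis.
Set Implicit Arguments. Unset Strict Implicit. Unset Printing Implicit Defensive.
Import Order.TTheory GRing.Theory Num.Theory.
Local Open Scope classical_set_scope.
Local Open Scope ring_scope.

Definition distF (R : realType) (P : probability R R) (y : R) : R :=
  fine (P [set` `]-oo, y]]).

Definition mean (R : realType) (P : probability R R) : \bar R :=
  (\int[P]_x (x%:E))%E.
Definition second_moment (R : realType) (P : probability R R) : \bar R :=
  (\int[P]_x ((x ^+ 2)%:E))%E.

Definition cond_second_moment_nonpos (R : realType) (P : probability R R) : R :=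
  fine (\int[P]_(x in [set` `]-oo, 0%R : R]]) ((x ^+ 2)%:E))%E / distF P 0.

Definition Gfun (R : realType) (P : probability R R) (y : R) : R :=
  fine (\int[P]_(x in [set` `]-oo, y]]) ((x ^+ 2 - y * x)%:E))%E.

From HB Require Import structures.
From mathcomp Require Import all_boot all_order all_algebra.
From mathcomp Require Import all_classical all_reals all_analysis.
From mathcomp Require Import measurable_realfun ring lra.
Import Order.TTheory GRing.Theory Num.Theory.
Local Open Scope classical_set_scope.
Local Open Scope ring_scope.
Set Implicit Arguments.
Unset Strict Implicit.
Unset Printing Implicit Defensive.

(* Let p = F(0), q = F(y) - F(0) and A = E[X^2; X <= 0] for a root y >= 0 of G.
   G(y) = 0 is the integral of (x^2 - y x) 1{x <= y}, which is at most -3a^2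
   on ]a, y - a] and at most (1 + y/2s) x^2 + y s/2 on ]-oo, 0]; hence
   3a^2 (F(y - a) - F(a)) <= (1 + y/2s) A + y s p/2 for every s > 0.
   For a = q/4M the Lipschitz bound puts mass >= q/2 in ]a, y - a]; with
   A <= K p, the choice s = sqrt K, and y mu <= C (again from G(y) = 0, since
   the integrand is at most x^2 - y x), this yields q^3 <= Theta p. *)

Section integrable_EFin.
Context {d : measure_display} {T : measurableType d} {R : realType}.
Context {mu : {measure set T -> \bar R}} {D : set T}.
Hypothesis mD : measurable D.

Lemma integrableD_EFin (f g : T -> R) :
  mu.-integrable D (EFin \o f) -> mu.-integrable D (EFin \o g) ->
  mu.-integrable D (EFin \o (fun x => f x + g x)).
Proof. exact: integrableD. Qed.

Lemma integrableB_EFin (f g : T -> R) :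
  mu.-integrable D (EFin \o f) -> mu.-integrable D (EFin \o g) ->
  mu.-integrable D (EFin \o (fun x => f x - g x)).
Proof. exact: integrableB. Qed.

Lemma integrableZl_EFin (k : R) (f : T -> R) :
  mu.-integrable D (EFin \o f) -> mu.-integrable D (EFin \o (fun x => k * f x)).
Proof. exact: integrableZl. Qed.

End integrable_EFin.

Lemma indic_itvNyE (R : realType) (b x : R) :
  \1_([set` `]-oo, b]]) x = if x <= b then 1 else 0 :> R.
Proof. by rewrite indicE mem_setE in_itv /=; case: ifP. Qed.

Lemma Gfun_integrand_le_quad (R : realType) (y x : R) : 0 <= y ->
  (x ^+ 2 - y * x) * \1_([set` `]-oo, y]]) x <= x ^+ 2 - y * x.
Proof.
move=> y0; rewrite indic_itvNyE; case: (lerP x y) => [_|xy] /=; first by rewrite mulr1.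
by rewrite mulr0 subr_ge0 expr2 ler_pM2r //; [exact: ltW | exact: le_lt_trans xy].
Qed.

(* With y = 2 t s: on ]-oo, 0] the bound is t (x + s)^2 >= 0, and on
   ]a, y - a] it is x (y - x) >= a (y - a) >= 3 a^2. *)
Lemma Gfun_integrand_le_mass (R : realType) (y s a x : R) :
  0 < s -> 0 < a -> 4 * a <= y ->
  (x ^+ 2 - y * x) * \1_([set` `]-oo, y]]) x <=
  (1 + y / (2 * s)) * (x ^+ 2 * \1_([set` `]-oo, 0]]) x)
  + y * s / 2 * \1_([set` `]-oo, 0]]) x
  - 3 * a ^+ 2 * (\1_([set` `]-oo, y - a]]) x - \1_([set` `]-oo, a]]) x).
Proof.
move=> s_gt0 a_gt0 ya; rewrite !indic_itvNyE.
set t := y / (2 * s).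
have t_ge0 : 0 <= t by rewrite divr_ge0 //; lra.
have yE : y = 2 * t * s by rewrite /t; field; rewrite gt_eqF.
have -> : y * s / 2 = t * s ^+ 2 by rewrite yE; field.
case: (lerP x 0) => [x_le0 | x_gt0] /=.
  rewrite !ifT; try lra.
  by have := mulr_ge0 t_ge0 (sqr_ge0 (x + s)); rewrite yE; nra.
have [x_le_a | a_lt_x] /= := lerP x a.
  rewrite !ifT; try lra.
  have : 0 <= x * (y - x) by apply: mulr_ge0; lra.
  nra.
have [x_le_ya | ya_lt_x] /= := lerP x (y - a).
  rewrite ifT; last lra.
  have : 0 <= (x - a) * (y - a - x) by apply: mulr_ge0; lra.
  have : 0 <= a * (y - 4 * a) by apply: mulr_ge0; lra.
  nra.
have [x_le_y | y_lt_x] /= := lerP x y; last lra.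
have : 0 <= x * (y - x) by apply: mulr_ge0; lra.
nra.
Qed.

Lemma ler_inf_div_add (R : rcfType) (x b c k : R) : 0 <= c -> 0 <= k ->
  (forall s, 0 < s -> x <= b + c * (k / s + s)) -> x <= b + 2 * c * Num.sqrt k.
Proof.
move=> c_ge0 k_ge0 hx.
have [k_gt0 | k_le0] := ltrP 0 k.
  have sqrtk_gt0 : 0 < Num.sqrt k by rewrite sqrtr_gt0.
  have := hx _ sqrtk_gt0; rewrite -{1}(sqr_sqrtr k_ge0) expr2 mulfK ?gt_eqF //.
  lra.
have k0 : k = 0 by lra.
subst k; rewrite sqrtr0 mulr0 addr0; apply/ler_addgt0Pr => e e_gt0.
have [c_gt0 | c_le0] := ltrP 0 c.
  by have := hx _ (divr_gt0 e_gt0 c_gt0); rewrite mul0r add0r mulrC divfK ?gt_eqF.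
have := hx _ ltr01; rewrite (_ : c = 0); lra.
Qed.

Lemma ler_add_root_mul (R : realType) (n : nat) (u p T : R) :
  (0 < n)%N -> 0 <= p -> (u - p) ^+ n <= T * p ->
  u <= p + T `^ n%:R^-1 * p `^ n%:R^-1.
Proof.
move=> n_gt0 p_ge0 hT; rewrite -lerBlDl.
have [up_le0 | up_gt0] := lerP (u - p) 0.
  exact: le_trans up_le0 (mulr_ge0 (powR_ge0 _ _) (powR_ge0 _ _)).
have Tp_gt0 : 0 < T * p := lt_le_trans (exprn_gt0 n up_gt0) hT.
have T_ge0 : 0 <= T by nra.
have n_neq0 : n%:R != 0 :> R by rewrite pnatr_eq0 -lt0n.
have -> : u - p = ((u - p) ^+ n) `^ n%:R^-1.
  by rewrite -powR_mulrn ?ltW // -powRrM mulfV ?powRr1 ?ltW.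
rewrite -powRM //; apply: ge0_ler_powR => //; rewrite ?invr_ge0 ?nnegrE //.
- by rewrite exprn_ge0 // ltW.
- exact: ltW.
Qed.

Lemma distF_ge0 (R : realType) (P : probability R R) (b : R) : 0 <= distF P b.
Proof. exact/fine_ge0/measure_ge0. Qed.

Lemma Rintegral_indic_itvNy (R : realType) (P : probability R R) (b : R) :
  \int[P]_x \1_([set` `]-oo, b]]) x = distF P b.
Proof. by rewrite /Rintegral integral_indic ?setIT. Qed.

Lemma Rintegral_itvNy_indic (R : realType) (P : probability R R) (f : R -> R) (b : R) :
  \int[P]_(x in [set` `]-oo, b]]) f x = \int[P]_x (f x * \1_([set` `]-oo, b]]) x).
Proof. by rewrite Rintegral_mkcond patch_indic. Qed.

Lemma GfunE (R : realType) (P : probability R R) (y : R) :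
  Gfun P y = \int[P]_x ((x ^+ 2 - y * x) * \1_([set` `]-oo, y]]) x).
Proof. exact: Rintegral_itvNy_indic. Qed.

Lemma integrable_sqr_of_second_moment_le (R : realType) (P : probability R R) (C : R) :
  (second_moment P <= C%:E)%E -> P.-integrable setT (EFin \o (fun x : R => x ^+ 2)).
Proof.
move=> hC; apply/integrableP; split; first exact/measurable_EFinP/measurable_funX.
under eq_integral do rewrite gee0_abs ?lee_fin ?sqr_ge0 //.
exact: le_lt_trans hC (ltey _).
Qed.

Section finite_second_moment.
Variables (R : realType) (P : probability R R).
Hypothesis sqr_int : P.-integrable setT (EFin \o (fun x : R => x ^+ 2)).

Lemma integrable_sqr_dominated (f : R -> R) (c : R) :
  measurable_fun setT f -> (forall x, `|f x| <= c * (1 + x ^+ 2)) ->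
  P.-integrable setT (EFin \o f).
Proof.
move=> mf f_le.
have dom_int : P.-integrable setT (EFin \o (fun x : R => c * (1 + x ^+ 2))).
  apply/(integrableZl_EFin measurableT)/(integrableD_EFin measurableT) => //.
  exact: finite_measure_integrable_cst.
apply: le_integrable dom_int => //; first exact/measurable_EFinP.
by move=> x _; rewrite /= lee_fin (le_trans (f_le x)) ?ler_norm.
Qed.

Lemma integrable_id : P.-integrable setT (EFin \o id).
Proof.
apply: (@integrable_sqr_dominated _ 1) => // x; rewrite mul1r.
by case: (lerP 0 x) => x0; [rewrite ger0_norm | rewrite ltr0_norm]; nra.
Qed.

Lemma meanE : mean P = (\int[P]_x x)%:E.
Proof. by rewrite fineK // (integrable_fin_num _ integrable_id). Qed.

Lemma second_momentE : second_moment P = (\int[P]_x x ^+ 2)%:E.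
Proof. by rewrite fineK // (integrable_fin_num _ sqr_int). Qed.

Lemma integrable_Gfun_integrand (y : R) :
  P.-integrable setT (EFin \o (fun x => (x ^+ 2 - y * x) * \1_([set` `]-oo, y]]) x)).
Proof.
apply: (@integrable_sqr_dominated _ (1 + `|y|)).
  apply: measurable_funM => //; apply: measurable_funB; first exact: measurable_funX.
  exact: measurable_funM.
move=> x; rewrite normrM indic_itvNyE.
have ind_le1 : `|if x <= y then 1 else 0 : R| <= 1 by case: ifP; rewrite ?normr1 ?normr0.
have quad_le : `|x ^+ 2 - y * x| <= (1 + `|y|) * (1 + x ^+ 2).
  rewrite (le_trans (ler_normB _ _)) // normrX normrM real_normK ?num_real //.
  have : `|x| <= 1 + x ^+ 2.
    by case: (lerP 0 x) => x0; [rewrite ger0_norm | rewrite ltr0_norm]; nra.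
  by have := normr_ge0 y; nra.
by rewrite -[leRHS]mulr1 ler_pM.
Qed.

Lemma Gfun_root_mul_mean_le (y : R) : 0 <= y -> Gfun P y = 0 ->
  y * \int[P]_x x <= \int[P]_x x ^+ 2.
Proof.
move=> y0 G0.
have int_yx := integrableZl_EFin measurableT y integrable_id.
have : Gfun P y <= \int[P]_x (x ^+ 2 - y * x).
  rewrite GfunE; apply: le_Rintegral => //.
  - exact: integrable_Gfun_integrand.
  - exact: integrableB_EFin.
  - by move=> x _; apply: Gfun_integrand_le_quad.
by rewrite G0 RintegralB // RintegralZl ?subr_ge0 //; exact: integrable_id.
Qed.

Lemma Gfun_root_mass_le (y s a : R) :
  0 < s -> 0 < a -> 4 * a <= y -> Gfun P y = 0 ->
  3 * a ^+ 2 * (distF P (y - a) - distF P a) <=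
  (1 + y / (2 * s)) * \int[P]_(x in [set` `]-oo, 0]]) x ^+ 2 + y * s / 2 * distF P 0.
Proof.
move=> s_gt0 a_gt0 ya G0.
have int_I b : P.-integrable setT (EFin \o (\1_([set` `]-oo, b]]) : R -> R)).
  exact: integrable_indic.
have int_sqI : P.-integrable setT
    (EFin \o (fun x => x ^+ 2 * \1_([set` `]-oo, 0]]) x)).
  apply: (@integrable_sqr_dominated _ 1).
    by apply: measurable_funM; [exact: measurable_funX | exact: measurable_indic].
  move=> x; rewrite indic_itvNyE mul1r normrM normrX real_normK ?num_real //.
  by case: ifP; rewrite ?normr1 ?normr0 ?mulr1 ?mulr0; have := sqr_ge0 x; lra.
have int_c1 := integrableZl_EFin measurableT (1 + y / (2 * s)) int_sqI.
have int_c2 := integrableZl_EFin measurableT (y * s / 2) (int_I 0).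
have int_mass := integrableB_EFin measurableT (int_I (y - a)) (int_I a).
have int_c3 := integrableZl_EFin measurableT (3 * a ^+ 2) int_mass.
have int_c12 := integrableD_EFin measurableT int_c1 int_c2.
have := le_Rintegral measurableT (integrable_Gfun_integrand y)
  (integrableB_EFin measurableT int_c12 int_c3)
  (fun x _ => Gfun_integrand_le_mass x s_gt0 a_gt0 ya).
rewrite -GfunE G0 RintegralB // RintegralD // !RintegralZl // RintegralB //.
rewrite !Rintegral_indic_itvNy -Rintegral_itvNy_indic; lra.
Qed.

Lemma Gfun_root_increment_cube_le (M y s : R) :
  (forall x t : R, 0 <= x -> 0 < t -> distF P (x + t) - distF P x <= M * t) ->
  0 <= y -> Gfun P y = 0 -> 0 < s -> 0 < distF P y - distF P 0 ->
  3 * (distF P y - distF P 0) ^+ 3 <= 32 * M ^+ 2 *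
    ((1 + y / (2 * s)) * \int[P]_(x in [set` `]-oo, 0]]) x ^+ 2
     + y * s / 2 * distF P 0).
Proof.
move=> F_lip y_ge0 G0 s_gt0; set q := distF P y - distF P 0 => q_gt0.
have y_gt0 : 0 < y.
  rewrite lt_neqAle y_ge0 andbT; apply: contraTneq q_gt0 => y0.
  by rewrite /q -y0 subrr ltxx.
have q_le : q <= M * y by have := F_lip 0 y (lexx 0) y_gt0; rewrite add0r.
have M_gt0 : 0 < M by rewrite -(pmulr_lgt0 _ y_gt0) (lt_le_trans q_gt0 q_le).
set a := q / (4 * M).
have a_gt0 : 0 < a by rewrite divr_gt0 // mulr_gt0.
have Ma : M * a = q / 4 by rewrite /a; field; rewrite gt_eqF.
have ya : 4 * a <= y by nra.
have mass : q / 2 <= distF P (y - a) - distF P a.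
  have := F_lip (y - a) a ltac:(lra) a_gt0; have := F_lip 0 a (lexx 0) a_gt0.
  rewrite subrK add0r; have : q = distF P y - distF P 0 by []; lra.
have -> : 3 * q ^+ 3 = 32 * M ^+ 2 * (3 * a ^+ 2 * (q / 2)).
  by rewrite /a; field; rewrite gt_eqF.
apply: ler_wpM2l; first by rewrite mulr_ge0 // sqr_ge0.
apply: le_trans _ (Gfun_root_mass_le s_gt0 a_gt0 ya G0).
by apply: ler_wpM2l mass; rewrite mulr_ge0 // sqr_ge0.
Qed.

End finite_second_moment.

Lemma Gfun_root_mul_le (R : realType) (P : probability R R) (mu C y : R) :
  (mu%:E <= mean P)%E -> (second_moment P <= C%:E)%E ->
  0 <= y -> Gfun P y = 0 -> y * mu <= C.
Proof.
move=> mu_le hC y_ge0 G0.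
have sqr_int := integrable_sqr_of_second_moment_le hC.
have mu_le' : mu <= \int[P]_x x by rewrite -lee_fin -meanE.
have sm_le : \int[P]_x x ^+ 2 <= C by rewrite -lee_fin -second_momentE.
apply: le_trans (ler_wpM2l y_ge0 mu_le') _.
exact: le_trans (Gfun_root_mul_mean_le sqr_int y_ge0 G0) sm_le.
Qed.

(* The argument gives the constant 32/3 where the statement has 27. *)
Lemma Gfun_root_distF_cube_le (R : realType) (P : probability R R) (mu C K M y : R) :
  0 < distF P 0 -> 0 < mu -> (mu%:E <= mean P)%E -> (second_moment P <= C%:E)%E ->
  cond_second_moment_nonpos P <= K ->
  (forall x t : R, 0 <= x -> 0 < t -> distF P (x + t) - distF P x <= M * t) ->
  0 <= y -> Gfun P y = 0 ->
  (distF P y - distF P 0) ^+ 3 <=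
    27 * (K + C * Num.sqrt K / mu) * M ^+ 2 * distF P 0.
Proof.
move=> p_gt0 mu_gt0 mu_le hC hK F_lip y_ge0 G0.
have sqr_int := integrable_sqr_of_second_moment_le hC.
set p := distF P 0 in p_gt0 hK *; set q := distF P y - p.
set A := \int[P]_(x in [set` `]-oo, 0]]) x ^+ 2.
have A_ge0 : 0 <= A by apply: Rintegral_ge0 => x _; exact: sqr_ge0.
have A_le : A <= K * p by rewrite -ler_pdivrMr.
have K_ge0 : 0 <= K by rewrite -(pmulr_lge0 _ p_gt0) (le_trans A_ge0 A_le).
have y_mu_le := Gfun_root_mul_le mu_le hC y_ge0 G0.
have C_ge0 : 0 <= C := le_trans (mulr_ge0 y_ge0 (ltW mu_gt0)) y_mu_le.
have L_ge0 : 0 <= K + C * Num.sqrt K / mu.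
  by rewrite addr_ge0 // divr_ge0 ?mulr_ge0 ?sqrtr_ge0 // ltW.
have LMp_ge0 := mulr_ge0 (mulr_ge0 L_ge0 (sqr_ge0 M)) (ltW p_gt0).
have Myp_ge0 := mulr_ge0 (mulr_ge0 (sqr_ge0 M) y_ge0) (ltW p_gt0).
have [q_le0 | q_gt0] := lerP q 0; first by have := sqr_ge0 q; nra.
have cube_le : 3 * q ^+ 3 <=
    32 * M ^+ 2 * K * p + 2 * (16 * M ^+ 2 * y * p) * Num.sqrt K.
  apply: ler_inf_div_add => // [|s s_gt0]; first lra.
  apply: le_trans (Gfun_root_increment_cube_le sqr_int F_lip y_ge0 G0 s_gt0 q_gt0) _.
  rewrite (_ : 32 * M ^+ 2 * K * p + 16 * M ^+ 2 * y * p * (K / s + s) =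
               32 * M ^+ 2 * ((1 + y / (2 * s)) * (K * p) + y * s / 2 * p));
    last by field; rewrite gt_eqF.
  apply: ler_wpM2l; first by rewrite mulr_ge0 // sqr_ge0.
  rewrite lerD2r; apply: ler_wpM2l A_le.
  by rewrite addr_ge0 // divr_ge0 // mulr_ge0 // ltW.
have ysK_le : M ^+ 2 * p * (y * Num.sqrt K) <= M ^+ 2 * p * (C * Num.sqrt K / mu).
  apply: ler_wpM2l; first exact: mulr_ge0 (sqr_ge0 M) (ltW p_gt0).
  by rewrite mulrAC ler_wpM2r ?sqrtr_ge0 // ler_pdivlMr.
lra.
Qed.

Lemma cvg_powR0 (R : realType) (u : nat -> R) (r : R) :
  0 < r -> (forall n, 0 < u n) -> u @ \oo --> (0 : R^o) ->
  (fun n => u n `^ r) @ \oo --> (0 : R^o).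
Proof.
move=> r_gt0 u_gt0 u_cvg0; apply: cvg_comp (powR_cvg0 r_gt0) => A /u_cvg0 A_near.
have u_pos : (u @ \oo) (fun x => 0 < x) by exists 0%N => // n _; exact: u_gt0.
by apply: filterS2 A_near u_pos => x; apply.
Qed.

Unset Implicit Arguments.

Theorem theorem3 (R : realType) (P : nat -> probability R R)
    (mu C K M : R) :
  (forall n, 0 < distF (P n) 0) ->
  (fun n => distF (P n) 0) @ \oo --> (0%R : R^o) ->
  0 < mu ->
  (forall n, (mu%:E <= mean (P n))%E) ->
  (forall n, (second_moment (P n) <= C%:E)%E) ->
  (forall n, cond_second_moment_nonpos (P n) <= K) ->
  (forall n (x t : R), 0 <= x -> 0 < t ->
      distF (P n) (x + t) - distF (P n) x <= M * t) ->
  let Theta := 27 * (K + C * Num.sqrt K / mu) * M ^+ 2 in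
  (forall n (y : R), 0 <= y -> Gfun (P n) y = 0 ->
      distF (P n) y <= distF (P n) 0
                       + Theta `^ (3^-1) * distF (P n) 0 `^ (3^-1)) /\
  (forall ystar : nat -> R,
      (forall n, 0 <= ystar n /\ Gfun (P n) (ystar n) = 0) ->
      (fun n => distF (P n) (ystar n)) @ \oo --> (0%R : R^o)).
Proof.
move=> p_gt0 p_cvg0 mu_gt0 mu_le hC hK F_lip Theta.
have distF_root_le n y : 0 <= y -> Gfun (P n) y = 0 ->
    distF (P n) y <= distF (P n) 0 + Theta `^ 3^-1 * distF (P n) 0 `^ 3^-1.
  move=> y_ge0 G0; apply: (ler_add_root_mul _ (ltW (p_gt0 n))) => //.
  exact: Gfun_root_distF_cube_le (p_gt0 n) mu_gt0 (mu_le n) (hC n) (hK n)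
    (F_lip n) y_ge0 G0.
split => // ystar ystar_root.
apply: (@squeeze_cvgr _ _ _ _ (fun=> 0)
  (fun n => distF (P n) 0 + Theta `^ 3^-1 * distF (P n) 0 `^ 3^-1)).
- apply: nearW => n; rewrite distF_ge0 /=.
  by have [y_ge0 G0] := ystar_root n; exact: distF_root_le.
- exact: (cvg_cst (0 : R^o)).
- have third_gt0 : (0 : R) < 3^-1 by rewrite invr_gt0.
  have := cvgD p_cvg0
    (cvgM (cvg_cst (Theta `^ 3^-1)) (cvg_powR0 third_gt0 p_gt0 p_cvg0)).
  by rewrite mulr0 addr0; apply.
Qed.
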